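(* Let $G$ be a group acting specially on a quasi-median graph $X$ with finitely many orbits of vertices. Fix a set of representatives $\{J_i\mid i\in I\}$ of the hyperplanes of $X$ modulo $G$ and, for each $i\in I$, let $G_i:=\mathfrak{S}(J_i)\oplus K_i$ where $K_i$ is a group whose cardinality equals the number of orbits of $\mathfrak{S}(J_i)\curvearrowright\mathscr{S}(J_i)$. Then, for every $i\in I$, $K_i$ is finite and $\mathfrak{S}(J_i)$ contains a finite-index subgroup isomorphic to $\mathrm{stab}_G(C)$ for a clique $C$ of $X$ (whose edges lie in $J_i$); in particular $G_i$ contains a finite-index subgroup isomorphic to the stabiliser of a clique of $X$.
   Context: A connected simplicial graph $X$ is quasi-median if it contains neither $K_4^-$ (the complete graph on four vertices minus an edge) nor $K_{3,2}$ as an induced subgraph, and satisfies: (triangle condition) for all vertices $a,x,y$ with $x,y$ adjacent and $d(a,x)=d(a,y)$, there is a vertex $z$ adjacent to both $x,y$ with $d(a,z)=d(a,x)-1$; (quadrangle condition) for all vertices $a,x,y,z$ with $z$ adjacent to both $x$ and $y$ and $d(a,x)=d(a,y)=d(a,z)-1$, there is a vertex $w$ adjacent to both $x,y$ with $d(a,w)=d(a,z)-2$. A square is an induced 4-cycle; a clique is a maximal complete subgraph. A hyperplane is an equivalence class of edges for the transitive closure of the relation ''the two edges lie in a common triangle, or are opposite sides of a square''. The sectors of a hyperplane $J$ are the connected components of the graph obtained from $X$ by removing the interiors of all edges of $J$; $\mathscr{S}(J)$ denotes the set of sectors of $J$. The carrier $N(J)$ is the subgraph spanned by the edges of $J$.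 Two hyperplanes $J_1,J_2$ are transverse if there exist edges $e_1\in J_1$, $e_2 \in J_2$ which are two consecutive sides of a square; two distinct hyperplanes are tangent if they are not transverse and $N(J_1)\cap N(J_2)\neq\emptyset$. For a group $G$ acting by graph automorphisms on $X$, $\mathfrak{S}(J)$ denotes the image of $\mathrm{stab}_G(J)$ in the permutation group of $\mathscr{S}(J)$. The action is hyperplane-special if it is faithful and: (1) for every hyperplane $J$ and every $g\in G$ with $gJ\neq J$, $J$ and $gJ$ are neither transverse nor tangent; (2) for all transverse hyperplanes $J_1,J_2$ and every $g\in G$, $J_1$ and $gJ_2$ are not tangent. The action is special if it is hyperplane-special and, for every hyperplane $J$, the action $\mathfrak{S}(J)\curvearrowright\mathscr{S}(J)$ is free. *)

From Stdlib Require Import List Relations.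
Import ListNotations.
Set Implicit Arguments.

Definition is_group (G : Type) (mul : G -> G -> G) (inv : G -> G) (one : G) : Prop :=
  (forall a b c, mul a (mul b c) = mul (mul a b) c) /\
  (forall a, mul one a = a) /\
  (forall a, mul (inv a) a = one).

(* A "group" given by a subset memA of a carrier with multiplication mulA, whose
   elements are compared up to the congruence eqA (used to model a quotient,
   e.g. the image of stab_G(J) in Sym(S(J))).
   [fi_sub_iso ...] : A contains a finite-index subgroup isomorphic to the group
   (memB, mulB) (with Leibniz equality), i.e. there is an injective homomorphism
   phi from B to A whose image has finitely many left cosets in A. *)
Definition fi_sub_iso (A B : Type)
  (memA : A -> Prop) (eqA : A -> A -> Prop) (mulA : A -> A -> A)
  (memB : B -> Prop) (mulB : B -> B -> B) : Prop :=
  exists phi : B -> A,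
    (forall b, memB b -> memA (phi b)) /\
    (forall b1 b2, memB b1 -> memB b2 ->
        eqA (phi (mulB b1 b2)) (mulA (phi b1) (phi b2))) /\
    (forall b1 b2, memB b1 -> memB b2 -> eqA (phi b1) (phi b2) -> b1 = b2) /\
    (exists l : list A, (forall c, In c l -> memA c) /\
       forall a, memA a -> exists c b, In c l /\ memB b /\ eqA a (mulA c (phi b))).

Section Graph.
Variable V : Type.
Variable adj : V -> V -> Prop.

Definition simplicial : Prop :=
  (forall x, ~ adj x x) /\ (forall x y, adj x y -> adj y x).

Inductive walk : V -> V -> nat -> Prop :=
| walk0 : forall x, walk x x 0
| walkS : forall x y z n, adj x y -> walk y z n -> walk x z (S n).

Definition connected : Prop := forall x y, exists n, walk x y n.

Definition dist (x y : V) (n : nat) : Prop :=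
  walk x y n /\ forall m, walk x y m -> n <= m.

Definition induced_K4minus (a b c d : V) : Prop :=
  adj a b /\ adj a c /\ adj a d /\ adj b c /\ adj b d /\ c <> d /\ ~ adj c d.

Definition induced_K32 (a1 a2 a3 b1 b2 : V) : Prop :=
  a1 <> a2 /\ a1 <> a3 /\ a2 <> a3 /\ b1 <> b2 /\
  adj a1 b1 /\ adj a1 b2 /\ adj a2 b1 /\ adj a2 b2 /\ adj a3 b1 /\ adj a3 b2 /\
  ~ adj a1 a2 /\ ~ adj a1 a3 /\ ~ adj a2 a3 /\ ~ adj b1 b2.

Definition triangle_condition : Prop :=
  forall a x y n, adj x y -> dist a x n -> dist a y n ->
    exists z, adj z x /\ adj z y /\ dist a z (n - 1).

Definition quadrangle_condition : Prop :=
  forall a x y z n, x <> y -> adj z x -> adj z y ->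
    dist a x n -> dist a y n -> dist a z (S n) ->
    exists w, adj w x /\ adj w y /\ dist a w (n - 1).

Definition quasi_median : Prop :=
  simplicial /\ connected /\
  (forall a b c d, ~ induced_K4minus a b c d) /\
  (forall a1 a2 a3 b1 b2, ~ induced_K32 a1 a2 a3 b1 b2) /\
  triangle_condition /\ quadrangle_condition.

Definition is_square (a b c d : V) : Prop :=
  adj a b /\ adj b c /\ adj c d /\ adj d a /\ a <> c /\ b <> d /\
  ~ adj a c /\ ~ adj b d.

(* edges are represented by ordered pairs of adjacent vertices,
   identified up to orientation *)
Definition is_edge (e : V * V) : Prop := adj (fst e) (snd e).
Definition unord_eq (e f : V * V) : Prop :=
  e = f \/ (fst e = snd f /\ snd e = fst f).

Definition hyp_step (e f : V * V) : Prop :=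
  is_edge e /\ is_edge f /\
  ( unord_eq e f
  \/ (exists x y z, adj x y /\ adj y z /\ adj x z /\
        (unord_eq e (x, y) \/ unord_eq e (y, z) \/ unord_eq e (x, z)) /\
        (unord_eq f (x, y) \/ unord_eq f (y, z) \/ unord_eq f (x, z)))
  \/ (exists a b c d, is_square a b c d /\
        ((unord_eq e (a, b) /\ unord_eq f (c, d)) \/
         (unord_eq e (b, c) /\ unord_eq f (d, a))))).

(* a hyperplane: an equivalence class of edges, given as a predicate on
   oriented edges (closed under reversal of orientation) *)
Definition is_hyperplane (J : V * V -> Prop) : Prop :=
  exists e0, is_edge e0 /\
    forall f, J f <-> clos_refl_trans _ hyp_step e0 f.

Definition same_hyp (J1 J2 : V * V -> Prop) : Prop := forall e, J1 e <-> J2 e.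

Definition in_carrier (J : V * V -> Prop) (v : V) : Prop := exists w, J (v, w).

Definition transverse (J1 J2 : V * V -> Prop) : Prop :=
  exists a b c d, is_square a b c d /\ J1 (a, b) /\ J2 (b, c).

Definition tangent (J1 J2 : V * V -> Prop) : Prop :=
  ~ same_hyp J1 J2 /\ ~ transverse J1 J2 /\
  exists v, in_carrier J1 v /\ in_carrier J2 v.

(* x and y lie in the same sector of J: connected in X minus the
   (interiors of the) edges of J *)
Definition same_sector (J : V * V -> Prop) : V -> V -> Prop :=
  clos_refl_trans _ (fun x y => adj x y /\ ~ J (x, y)).

Definition is_clique (C : V -> Prop) : Prop :=
  (forall x y, C x -> C y -> x <> y -> adj x y) /\
  (forall v, ~ C v -> ~ (forall x, C x -> x <> v -> adj x v)).

End Graph.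

Section Action.
Variables (G V : Type) (mul : G -> G -> G) (inv : G -> G) (one : G).
Variable adj : V -> V -> Prop.
Variable act : G -> V -> V.

Definition is_graph_action : Prop :=
  (forall x, act one x = x) /\
  (forall g h x, act (mul g h) x = act g (act h x)) /\
  (forall g x y, adj x y <-> adj (act g x) (act g y)).

Definition faithful : Prop := forall g, (forall x, act g x = x) -> g = one.

Definition translate_hyp (g : G) (J : V * V -> Prop) : V * V -> Prop :=
  fun e => J (act (inv g) (fst e), act (inv g) (snd e)).

Definition stab_hyp (J : V * V -> Prop) (g : G) : Prop :=
  same_hyp (translate_hyp g J) J.

Definition stab_set (C : V -> Prop) (g : G) : Prop :=
  forall v, C (act (inv g) v) <-> C v.

(* two elements of stab_G(J) have the same image in the permutation group of
   the set of sectors S(J) (g sends the sector of x to the sector of g x) *)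
Definition sect_eq (J : V * V -> Prop) (g h : G) : Prop :=
  forall x, same_sector adj J (act g x) (act h x).

Definition hyperplane_special : Prop :=
  faithful /\
  (forall J g, is_hyperplane adj J -> ~ same_hyp (translate_hyp g J) J ->
     ~ transverse adj J (translate_hyp g J) /\ ~ tangent adj J (translate_hyp g J)) /\
  (forall J1 J2 g, is_hyperplane adj J1 -> is_hyperplane adj J2 ->
     transverse adj J1 J2 -> ~ tangent adj J1 (translate_hyp g J2)).

(* the action of frak-S(J) on the sectors of J is free: an element fixing some
   sector acts trivially on all sectors *)
Definition special_action : Prop :=
  hyperplane_special /\
  (forall J, is_hyperplane adj J -> forall g, stab_hyp J g ->
     (exists x, same_sector adj J (act g x) x) ->
     forall y, same_sector adj J (act g y) y).

Definition finitely_many_vertex_orbits : Prop :=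
  exists l : list V, forall v, exists u g, In u l /\ act g u = v.

Definition sector_orbit_rel (J : V * V -> Prop) (x y : V) : Prop :=
  exists g, stab_hyp J g /\ same_sector adj J (act g x) y.

End Action.

(* Every hyperplane is the hyperplane [J] of an edge [x0 y0]; let [C] be the clique through
   that edge. [C] is gated: each vertex [v] has a unique nearest vertex [gate v] in [C]. The
   triangle and quadrangle conditions show that an edge lies in [J] exactly when its endpoints
   have different gates, so the sectors of [J] correspond to the vertices of [C]. Specialness
   forbids distinct translates of [J] from sharing a carrier vertex, and freeness on sectors
   makes vertex stabilisers trivial. Hence [stab_G(C)] embeds in the image of [stab_G(J)] on the
   sectors, with finite index since only finitely many vertex orbits meet [C]; the same finiteness
   bounds the number of sector orbits, so [K] is finite. *)

From Stdlib Require Import List Relations Lia Classical ClassicalEpsilon.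
From Stdlib Require Import FunctionalExtensionality PropExtensionality.
Set Implicit Arguments.

Lemma exists_least_nat (P : nat -> Prop) n :
  P n -> exists m, P m /\ forall k, P k -> m <= k.
Proof.
  induction n as [n IH] using (well_founded_induction Wf_nat.lt_wf); intros Pn.
  destruct (classic (exists k, k < n /\ P k)) as [[k [Hk Pk]]|Hnone].
  - exact (IH k Hk Pk).
  - exists n; split; auto. intros k Pk.
    destruct (PeanoNat.Nat.lt_ge_cases k n); auto. exfalso; eauto.
Qed.

Section GroupLaws.
Variables (T : Type) (mul : T -> T -> T) (inv : T -> T) (one : T).
Hypothesis HT : is_group mul inv one.

Lemma mul_assoc a b c : mul a (mul b c) = mul (mul a b) c. Proof. apply HT. Qed.
Lemma one_mul a : mul one a = a. Proof. apply HT. Qed.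
Lemma mul_inv_l a : mul (inv a) a = one. Proof. apply HT. Qed.

Lemma mul_inv_r a : mul a (inv a) = one.
Proof.
  set (h := mul a (inv a)).
  assert (Hidem : mul h h = h).
  { unfold h. rewrite <- mul_assoc, (mul_assoc (inv a)), mul_inv_l, one_mul; auto. }
  transitivity (mul (mul (inv h) h) h).
  - rewrite mul_inv_l, one_mul; auto.
  - rewrite <- mul_assoc, Hidem, mul_inv_l; auto.
Qed.

Lemma mul_one a : mul a one = a.
Proof. rewrite <- (mul_inv_l a), mul_assoc, mul_inv_r, one_mul; auto. Qed.

Lemma inv_inv a : inv (inv a) = a.
Proof. rewrite <- (mul_one (inv (inv a))), <- (mul_inv_l a), mul_assoc, mul_inv_l, one_mul; auto. Qed.

Lemma eq_of_inv_mul_eq_one a b : mul (inv b) a = one -> a = b.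
Proof. intros E. rewrite <- (one_mul a), <- (mul_inv_r b), <- mul_assoc, E, mul_one; auto. Qed.

End GroupLaws.

Lemma fi_sub_iso_prod_finite (A B K : Type)
  (memA : A -> Prop) (eqA : A -> A -> Prop) (mulA : A -> A -> A)
  (memB : B -> Prop) (mulB : B -> B -> B)
  (mulK : K -> K -> K) (invK : K -> K) (oneK : K) :
  is_group mulK invK oneK -> (exists lK : list K, forall k, In k lK) ->
  fi_sub_iso memA eqA mulA memB mulB ->
  fi_sub_iso (fun p : A * K => memA (fst p))
    (fun p q : A * K => eqA (fst p) (fst q) /\ snd p = snd q)
    (fun p q : A * K => (mulA (fst p) (fst q), mulK (snd p) (snd q)))
    memB mulB.
Proof.
  intros HK [lK HlK] [phi [Hmem [Hmul [Hinj [lc [Hlc Hcover]]]]]].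
  exists (fun b => (phi b, oneK)). split; [|split; [|split]]; simpl.
  - auto.
  - intros b1 b2 H1 H2. split; [auto | symmetry; apply (one_mul HK)].
  - intros b1 b2 H1 H2 [E _]; auto.
  - exists (list_prod lc lK). split.
    + intros [c k] I. apply in_prod_iff in I. apply Hlc; tauto.
    + intros [a k] Ha. destruct (Hcover a Ha) as [c [b [Ic [Hb Eb]]]].
      exists (c, k), b. repeat split; simpl; auto.
      * apply in_prod_iff; auto.
      * symmetry; apply (mul_one HK).
Qed.

Lemma list_choice (A B : Type) (P : A -> B -> Prop) (l : list A) :
  exists lb : list B, (forall b, In b lb -> exists a, P a b) /\
    forall a, In a l -> (exists b, P a b) -> exists b, In b lb /\ P a b.
Proof.
  induction l as [|a l [lb [Hlb Hl]]].
  - exists nil. split; [intros b []|intros a []].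
  - destruct (classic (exists b, P a b)) as [[b Hb]|Hnone].
    + exists (b :: lb). split.
      * intros b' [<-|I]; eauto.
      * intros a' [<-|I] Ha'; [exists b; simpl; auto|].
        destruct (Hl a' I Ha') as [b' [Ib' Hb']]. exists b'; simpl; auto.
    + exists lb. split; auto. intros a' [<-|I] Ha'; [contradiction|auto].
Qed.

Lemma finite_of_orbit_labelling (X K : Type) (R : X -> X -> Prop) (f : K -> X) (l : list X) :
  (forall x y z, R x y -> R y z -> R x z) ->
  (forall x, exists u, In u l /\ R u x) ->
  (forall x, exists k, R (f k) x) ->
  (forall k1 k2, R (f k1) (f k2) -> k1 = k2) ->
  exists lK : list K, forall k, In k lK.
Proof.
  intros Htrans Hl Hsurj Hinj.
  destruct (list_choice (fun u k => R (f k) u) l) as [lK [_ Hcover]].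
  exists lK. intros k.
  destruct (Hl (f k)) as [u [Iu Ru]].
  destruct (Hcover u Iu (Hsurj u)) as [k' [Ik' Rk']].
  rewrite <- (Hinj k' k); eauto.
Qed.

Section QuasiMedian.
Variables (V : Type) (adj : V -> V -> Prop).
Hypothesis HX : quasi_median adj.

Lemma adj_sym x y : adj x y -> adj y x. Proof. apply HX. Qed.
Lemma adj_irrefl x : ~ adj x x. Proof. apply HX. Qed.
Lemma adj_neq x y : adj x y -> x <> y. Proof. intros A ->; exact (adj_irrefl A). Qed.

Lemma walk_snoc x y z n : walk adj x y n -> adj y z -> walk adj x z (S n).
Proof. induction 1; intros; econstructor; eauto; constructor. Qed.

Lemma walk_rev x y n : walk adj x y n -> walk adj y x n.
Proof. induction 1; [constructor | eapply walk_snoc; eauto using adj_sym]. Qed.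

Lemma walk_split_last n x z :
  walk adj x z (S n) -> exists y, walk adj x y n /\ adj y z.
Proof.
  revert x; induction n; intros x W; inversion W as [|? y ? ? A W']; subst.
  - inversion W'; subst. exists x; split; [constructor | auto].
  - destruct (IHn _ W') as [y' [W'' A']]. exists y'; split; [econstructor; eauto | auto].
Qed.

Lemma exists_dist x y : exists n, dist adj x y n.
Proof.
  destruct (proj1 (proj2 HX) x y) as [n Hn].
  destruct (exists_least_nat (walk adj x y) n Hn) as [m [W M]]. exists m; split; auto.
Qed.

Definition gdist x y : nat := proj1_sig (constructive_indefinite_description _ (exists_dist x y)).

Lemma gdist_spec x y : dist adj x y (gdist x y).
Proof. exact (proj2_sig (constructive_indefinite_description _ (exists_dist x y))). Qed.

Lemma gdist_walk x y : walk adj x y (gdist x y). Proof. apply gdist_spec. Qed.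
Lemma gdist_le_walk x y n : walk adj x y n -> gdist x y <= n. Proof. apply gdist_spec. Qed.

Lemma gdist_of_dist x y n : dist adj x y n -> gdist x y = n.
Proof.
  intros [W M]. apply PeanoNat.Nat.le_antisymm; [apply gdist_le_walk | apply M, gdist_walk]; auto.
Qed.

Lemma gdist_sym x y : gdist x y = gdist y x.
Proof. apply PeanoNat.Nat.le_antisymm; apply gdist_le_walk, walk_rev, gdist_walk. Qed.

Lemma gdist_refl x : gdist x x = 0.
Proof. pose proof (gdist_le_walk (walk0 adj x)); lia. Qed.

Lemma gdist_eq0 x y : gdist x y = 0 -> x = y.
Proof. intros H. pose proof (gdist_walk x y) as W. rewrite H in W. inversion W; auto. Qed.

Lemma gdist_adj_le x y z : adj y z -> gdist x z <= S (gdist x y).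
Proof. intros A. apply gdist_le_walk. eapply walk_snoc; eauto using gdist_walk. Qed.

Lemma gdist_adj x y : adj x y -> gdist x y = 1.
Proof.
  intros A. assert (H : gdist x y <= 1) by (apply gdist_le_walk; repeat econstructor; eauto).
  destruct (gdist x y) eqn:E; [|lia]. apply gdist_eq0 in E. destruct (adj_neq A E).
Qed.

Lemma triangle_gdist a x y : adj x y -> gdist a x = gdist a y ->
  exists z, adj z x /\ adj z y /\ gdist a z = gdist a x - 1.
Proof.
  intros A E. destruct (proj1 (proj2 (proj2 (proj2 (proj2 HX)))) a x y (gdist a x) A)
    as [z [Zx [Zy Dz]]]; [apply gdist_spec | rewrite E; apply gdist_spec |].
  exists z; repeat split; auto. apply gdist_of_dist; auto.
Qed.

Lemma quadrangle_gdist a x y z : x <> y -> adj z x -> adj z y -> gdist a x = gdist a y ->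
  gdist a z = S (gdist a x) -> exists w, adj w x /\ adj w y /\ gdist a w = gdist a x - 1.
Proof.
  intros N Ax Ay E Ez. destruct (proj2 (proj2 (proj2 (proj2 (proj2 HX)))) a x y z (gdist a x) N Ax Ay)
    as [w [Wx [Wy Dw]]];
    [apply gdist_spec | rewrite E; apply gdist_spec | rewrite <- Ez; apply gdist_spec |].
  exists w; repeat split; auto. apply gdist_of_dist; auto.
Qed.

Lemma no_K4minus a b c e : adj a b -> adj a c -> adj a e -> adj b c -> adj b e ->
  c <> e -> ~ adj c e -> False.
Proof. intros. apply (proj1 (proj2 (proj2 HX)) a b c e). repeat split; auto. Qed.

Lemma no_three_common_nbrs x y u1 u2 u3 : x <> y -> ~ adj x y ->
  adj u1 x -> adj u1 y -> adj u2 x -> adj u2 y -> adj u3 x -> adj u3 y ->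
  u1 <> u2 -> u1 <> u3 -> u2 <> u3 -> ~ adj u1 u2 -> ~ adj u1 u3 -> False.
Proof.
  intros. destruct (classic (adj u2 u3)).
  - apply (no_K4minus (a := u2) (b := u3) (c := x) (e := y)); auto.
  - apply (proj1 (proj2 (proj2 (proj2 HX))) u1 u2 u3 x y). repeat split; auto.
Qed.

Section EdgeClique.
Variables x0 y0 : V.
Hypothesis Hxy : adj x0 y0.

Definition edge_clique (z : V) : Prop := z = x0 \/ z = y0 \/ (adj z x0 /\ adj z y0).

Lemma edge_clique_x0 : edge_clique x0. Proof. left; auto. Qed.
Lemma edge_clique_y0 : edge_clique y0. Proof. right; left; auto. Qed.

Lemma edge_clique_is_clique : is_clique adj edge_clique.
Proof.
  split.
  - intros x y Hx Hy N.
    destruct Hx as [->|[->|[Ax1 Ax2]]]; destruct Hy as [->|[->|[Ay1 Ay2]]];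
      try (exfalso; apply N; reflexivity); auto using adj_sym.
    destruct (classic (adj x y)) as [|NA]; auto. exfalso.
    apply (no_K4minus (a := x0) (b := y0) (c := x) (e := y)); auto using adj_sym.
  - intros v Nv H. apply Nv. right; right.
    assert (v <> x0) by (intros ->; exact (Nv edge_clique_x0)).
    assert (v <> y0) by (intros ->; exact (Nv edge_clique_y0)).
    split; apply adj_sym, H; auto using edge_clique_x0, edge_clique_y0.
Qed.

Lemma edge_clique_adj x y : edge_clique x -> edge_clique y -> x <> y -> adj x y.
Proof. apply edge_clique_is_clique. Qed.

Lemma edge_clique_of_two_nbrs z c c' : edge_clique c -> edge_clique c' -> c <> c' ->
  adj z c -> adj z c' -> edge_clique z.
Proof.
  intros Hc Hc' N A A'. destruct (classic (edge_clique z)) as [|Nz]; auto. exfalso.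
  apply (proj2 edge_clique_is_clique z Nz). intros r Cr rz.
  destruct (classic (r = c)) as [->|Nc]; auto using adj_sym.
  destruct (classic (r = c')) as [->|Nc']; auto using adj_sym.
  destruct (classic (adj r z)) as [|NA]; auto. exfalso.
  apply (no_K4minus (a := c) (b := c') (c := r) (e := z)); auto using adj_sym, edge_clique_adj.
Qed.

Lemma exists_gate_dist v : exists m, (exists c, edge_clique c /\ gdist c v = m) /\
  forall k, (exists c, edge_clique c /\ gdist c v = k) -> m <= k.
Proof. apply (exists_least_nat _ (gdist x0 v)). exists x0; split; auto using edge_clique_x0. Qed.

Definition gate_dist v : nat :=
  proj1_sig (constructive_indefinite_description _ (exists_gate_dist v)).

Lemma gate_dist_spec v : (exists c, edge_clique c /\ gdist c v = gate_dist v) /\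
  forall k, (exists c, edge_clique c /\ gdist c v = k) -> gate_dist v <= k.
Proof. exact (proj2_sig (constructive_indefinite_description _ (exists_gate_dist v))). Qed.

Lemma gate_dist_le c v : edge_clique c -> gate_dist v <= gdist c v.
Proof. intros Hc. apply gate_dist_spec; eauto. Qed.

Definition gate v : V :=
  proj1_sig (constructive_indefinite_description _ (proj1 (gate_dist_spec v))).

Lemma gate_spec v : edge_clique (gate v) /\ gdist (gate v) v = gate_dist v.
Proof. exact (proj2_sig (constructive_indefinite_description _ (proj1 (gate_dist_spec v)))). Qed.

Lemma gate_in v : edge_clique (gate v). Proof. apply gate_spec. Qed.
Lemma gdist_gate v : gdist (gate v) v = gate_dist v. Proof. apply gate_spec. Qed.

Lemma gdist_gate_of_eq v c : gate v = c -> gdist c v = gate_dist v.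
Proof. intros <-; apply gdist_gate. Qed.

Lemma gate_dist_adj x y : adj x y -> gate_dist x <= S (gate_dist y).
Proof.
  intros A. pose proof (gate_dist_le x (gate_in y)).
  pose proof (gdist_adj_le (gate y) (adj_sym A)). rewrite gdist_gate in *. lia.
Qed.

(* The triangle condition makes the nearest point of the clique unique: a second
   point at the same distance would give a common neighbour in the clique, closer to [v]. *)
Lemma gdist_off_gate c v : edge_clique c -> gate v <> c -> gdist c v = S (gate_dist v).
Proof.
  intros Hc N. assert (A : adj (gate v) c) by (apply edge_clique_adj; auto using gate_in).
  assert (Hup : gdist c v <= S (gate_dist v)).
  { rewrite gdist_sym, <- gdist_gate, (gdist_sym (gate v)). apply gdist_adj_le; auto. }
  pose proof (gate_dist_le v Hc).
  destruct (classic (gdist c v = gate_dist v)) as [E|]; [|lia]. exfalso.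
  destruct (triangle_gdist v (x := c) (y := gate v)) as [z [Zc [Zg Dz]]].
  - apply adj_sym; auto.
  - rewrite (gdist_sym v c), (gdist_sym v (gate v)), E, gdist_gate; auto.
  - destruct (gate_dist v) eqn:F.
    + apply N. pose proof (gdist_gate v) as E2. rewrite F in E2.
      apply gdist_eq0 in E, E2. congruence.
    + pose proof (gate_dist_le v (edge_clique_of_two_nbrs Hc (gate_in v) (not_eq_sym N) Zc Zg)) as L.
      rewrite gdist_sym, Dz, gdist_sym, E in L. lia.
Qed.

Lemma gate_unique c v : edge_clique c -> gdist c v = gate_dist v -> c = gate v.
Proof.
  intros Hc E. destruct (classic (gate v = c)) as [|N]; auto.
  rewrite gdist_off_gate in E; auto; lia.
Qed.

Lemma gate_id v : edge_clique v -> gate v = v.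
Proof.
  intros H. symmetry. apply gate_unique; auto.
  pose proof (gate_dist_le v H). rewrite gdist_refl in *. lia.
Qed.

Lemma edge_clique_of_gate_dist0 v : gate_dist v = 0 -> edge_clique v.
Proof.
  intros H. pose proof (gdist_gate v) as E. rewrite H in E.
  apply gdist_eq0 in E. rewrite <- E. apply gate_in.
Qed.

Lemma gate_dist_eq_of_gate_neq v w : adj v w -> gate v <> gate w -> gate_dist v = gate_dist w.
Proof.
  intros A N.
  assert (E1 : gdist (gate v) w = S (gate_dist w)) by (apply gdist_off_gate; auto using gate_in).
  assert (E2 : gdist (gate w) v = S (gate_dist v)) by (apply gdist_off_gate; auto using gate_in).
  pose proof (gdist_adj_le (gate v) A). pose proof (gdist_adj_le (gate w) (adj_sym A)).
  rewrite gdist_gate in *. lia.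
Qed.

Lemma triangle_gate_change x y z : adj x y -> adj y z -> adj x z ->
  gate x <> gate y -> gate z <> gate x.
Proof.
  intros Axy Ayz Axz N E.
  pose proof (gate_dist_eq_of_gate_neq Axy N) as Fxy.
  assert (Fzy : gate_dist z = gate_dist y)
    by (apply gate_dist_eq_of_gate_neq; [apply adj_sym; auto | congruence]).
  assert (Dx : gdist (gate x) x = gate_dist x) by apply gdist_gate.
  assert (Dz : gdist (gate x) z = gate_dist z) by (apply gdist_gate_of_eq; auto).
  assert (Dy : gdist (gate x) y = S (gate_dist y)) by (apply gdist_off_gate; auto using gate_in).
  destruct (gate_dist x) eqn:Fx.
  - apply gdist_eq0 in Dx. rewrite Fzy, <- Fxy in Dz. apply gdist_eq0 in Dz.
    apply (adj_irrefl (x := x)). congruence.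
  - destruct (triangle_gdist (gate x) Axz) as [w [Wx [Wz Dw]]]; [congruence|].
    apply (no_K4minus (a := x) (b := z) (c := y) (e := w)); auto using adj_sym.
    + intros ->. lia.
    + intros A. pose proof (gdist_adj_le (gate x) (adj_sym A)). lia.
Qed.

Lemma triangle_gate_change_all x y z : adj x y -> adj y z -> adj x z ->
  (gate x <> gate y \/ gate y <> gate z \/ gate x <> gate z) ->
  gate x <> gate y /\ gate y <> gate z /\ gate x <> gate z.
Proof.
  intros Axy Ayz Axz [H|[H|H]].
  - pose proof (triangle_gate_change Axy Ayz Axz H).
    pose proof (triangle_gate_change (adj_sym Axy) Axz Ayz (not_eq_sym H)).
    repeat split; congruence.
  - pose proof (triangle_gate_change Ayz (adj_sym Axz) (adj_sym Axy) H).
    pose proof (triangle_gate_change (adj_sym Ayz) (adj_sym Axy) (adj_sym Axz) (not_eq_sym H)).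
    repeat split; congruence.
  - pose proof (triangle_gate_change Axz (adj_sym Ayz) Axy H).
    pose proof (triangle_gate_change (adj_sym Axz) Axy (adj_sym Ayz) (not_eq_sym H)).
    repeat split; congruence.
Qed.

(* In a square [a b c e] with [gate a <> gate b] and [gate c = gate e], either the common
   gate of [c, e] is [gate a] or it is new; the quadrangle condition, applied at a suitable
   gate, then produces an induced [K_{3,2}] or [K_4^-] in both cases. *)
Lemma square_gate_change_old a b c e : is_square adj a b c e ->
  gate a = gate c -> gate c = gate e -> gate a <> gate b -> False.
Proof.
  intros [Aab [Abc [Ace [Aea [Nac [Nbe [NAac NAbe]]]]]]] E1 E2 N.
  pose proof (gate_dist_eq_of_gate_neq Aab N) as F1.
  assert (F2 : gate_dist b = gate_dist c) by (apply gate_dist_eq_of_gate_neq; auto; congruence).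
  assert (Da : gdist (gate a) a = gate_dist a) by apply gdist_gate.
  assert (Dc : gdist (gate a) c = gate_dist c) by (apply gdist_gate_of_eq; auto).
  assert (Db : gdist (gate a) b = S (gate_dist b)) by (apply gdist_off_gate; auto using gate_in).
  destruct (gate_dist a) as [|n] eqn:Fa.
  { apply gdist_eq0 in Da. rewrite <- F2, <- F1 in Dc. apply gdist_eq0 in Dc. congruence. }
  destruct (classic (S n <= gdist (gate a) e)) as [Ge|Lt].
  - destruct (quadrangle_gdist (gate a) (x := a) (y := c) (z := b)) as [w [Wa [Wc Dw]]];
      auto using adj_sym; try congruence; try lia.
    apply (no_three_common_nbrs (x := a) (y := c) (u1 := b) (u2 := e) (u3 := w));
      auto using adj_sym.
    + intros ->. lia.
    + intros ->. lia.
    + intros A. pose proof (gdist_adj_le (gate a) (adj_sym A)). lia.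
  - pose proof (gdist_adj_le (gate a) Aea).
    assert (De : gdist (gate a) e = gate_dist e) by (apply gdist_gate_of_eq; congruence).
    assert (Qe : gdist (gate b) e = S (gate_dist e))
      by (apply gdist_off_gate; auto using gate_in; congruence).
    assert (Qb : gdist (gate b) b = gate_dist b) by apply gdist_gate.
    assert (Qa : gdist (gate b) a = S (gate_dist a)) by (apply gdist_off_gate; auto using gate_in).
    assert (Qc : gdist (gate b) c = S (gate_dist c))
      by (apply gdist_off_gate; auto using gate_in; congruence).
    destruct (quadrangle_gdist (gate b) (x := b) (y := e) (z := a)) as [w [Wb [We Dw]]];
      auto using adj_sym; try lia.
    apply (no_three_common_nbrs (x := b) (y := e) (u1 := a) (u2 := c) (u3 := w));
      auto using adj_sym.
    + intros ->. lia.
    + intros ->. lia.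
    + intros A. pose proof (gdist_adj_le (gate b) (adj_sym A)). lia.
Qed.

(* Seen from a third vertex [c] of the clique, both ends of a crossing edge [a b] lie one
   step beyond their gate-distance; the triangle condition then gives a common neighbour
   whose gate is [c]. *)
Lemma crossing_edge_common_nbr a b c : adj a b -> gate a <> gate b -> edge_clique c ->
  gate a <> c -> gate b <> c -> 0 < gate_dist a ->
  exists z, adj z a /\ adj z b /\ gate z = c /\ gate_dist z = gate_dist a.
Proof.
  intros Aab N Cc Na Nb Pos.
  pose proof (gate_dist_eq_of_gate_neq Aab N) as F.
  pose proof (gdist_off_gate a Cc Na) as Ra. pose proof (gdist_off_gate b Cc Nb) as Rb.
  destruct (triangle_gdist c Aab) as [z [Za [Zb Dz]]]; [lia|].
  pose proof (gate_dist_le z Cc). pose proof (gate_dist_adj (adj_sym Za)).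
  assert (Fz : gate_dist z = gate_dist a).
  { destruct (classic (gate_dist z = gate_dist a)) as [|NE]; auto. exfalso.
    assert (Gz : gate z = gate a).
    { destruct (classic (gate z = gate a)) as [|NG]; auto.
      pose proof (gate_dist_eq_of_gate_neq (adj_sym Za) (not_eq_sym NG)). lia. }
    pose proof (gdist_gate_of_eq z Gz). pose proof (gdist_adj_le (gate a) Zb).
    pose proof (gdist_off_gate b (gate_in a) (not_eq_sym N)). lia. }
  exists z. repeat split; auto. symmetry. apply gate_unique; auto. lia.
Qed.

Lemma square_gate_change_new a b c e : is_square adj a b c e -> gate c = gate e ->
  gate c <> gate a -> gate c <> gate b -> gate a <> gate b -> False.
Proof.
  intros [Aab [Abc [Ace [Aea [Nac [Nbe [NAac NAbe]]]]]]] E Nca Ncb N.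
  assert (F3 : gate_dist a = gate_dist e)
    by (apply gate_dist_eq_of_gate_neq; auto using adj_sym; congruence).
  assert (Ra : gdist (gate c) a = S (gate_dist a)) by (apply gdist_off_gate; auto using gate_in).
  assert (Re : gdist (gate c) e = gate_dist e) by (apply gdist_gate_of_eq; auto).
  assert (Pe : gdist (gate a) e = S (gate_dist e))
    by (apply gdist_off_gate; auto using gate_in; congruence).
  destruct (gate_dist a) as [|n] eqn:Fa.
  { apply Nac. pose proof (edge_clique_of_gate_dist0 a Fa).
    assert (edge_clique c) by (apply edge_clique_of_gate_dist0;
      rewrite <- (gate_dist_eq_of_gate_neq Abc), <- (gate_dist_eq_of_gate_neq Aab N); auto).
    destruct (classic (a = c)); auto. exfalso; apply NAac, edge_clique_adj; auto. }
  destruct (crossing_edge_common_nbr Aab N (gate_in c)) as [z [Za [Zb [Gz Fz]]]];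
    try congruence; try lia.
  assert (NAze : ~ adj z e).
  { intros A. apply (triangle_gate_change (x := z) (y := a) (z := e)); auto using adj_sym;
      congruence. }
  assert (Nze : z <> e) by (intros ->; apply NAbe, adj_sym; auto).
  assert (Rz : gdist (gate c) z = gate_dist z) by (apply gdist_gate_of_eq; auto).
  destruct (quadrangle_gdist (gate c) (x := z) (y := e) (z := a)) as [w [Wz [We Dw]]];
    auto using adj_sym; try lia.
  pose proof (gate_dist_le w (gate_in c)). pose proof (gate_dist_adj (adj_sym We)).
  assert (Pw : gate c = gate w) by (apply gate_unique; auto using gate_in; lia).
  assert (Dw' : gdist (gate a) w = S (gate_dist w))
    by (apply gdist_off_gate; auto using gate_in; congruence).
  assert (Naw : a <> w) by (intros ->; lia).
  assert (NAaw : ~ adj a w)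
    by (intros A; pose proof (gdist_adj_le (gate c) (adj_sym A)); lia).
  assert (Pa : gdist (gate a) a = S n) by (rewrite gdist_gate; auto).
  destruct (quadrangle_gdist (gate a) (x := a) (y := w) (z := e)) as [u [Ua [Uw Du]]];
    auto using adj_sym; try lia.
  assert (gdist (gate a) z = S (gate_dist z))
    by (apply gdist_off_gate; auto using gate_in; congruence).
  apply (no_three_common_nbrs (x := a) (y := w) (u1 := e) (u2 := z) (u3 := u)); auto using adj_sym.
  all: try (intros ->; lia).
  all: try (intros A; apply NAze, adj_sym; auto; fail).
  all: try (intros A; pose proof (gdist_adj_le (gate a) (adj_sym A)); lia).
Qed.

Lemma square_gate_change a b c e : is_square adj a b c e -> gate a <> gate b -> gate c <> gate e.
Proof.
  intros Sq N E.
  destruct (classic (gate c = gate a)) as [Ea|Na].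
  - apply (square_gate_change_old Sq); auto.
  - destruct (classic (gate c = gate b)) as [Eb|Nb].
    + destruct Sq as [Aab [Abc [Ace [Aea [Nac [Nbe [NAac NAbe]]]]]]].
      apply (square_gate_change_old (a := b) (b := a) (c := e) (e := c)); try congruence.
      repeat split; auto using adj_sym.
    + apply (square_gate_change_new Sq); auto.
Qed.

Definition edge_hyp (e : V * V) : Prop := clos_refl_trans _ (hyp_step adj) (x0, y0) e.

Lemma unord_eq_gate_neq e a b :
  unord_eq e (a, b) -> (gate (fst e) <> gate (snd e) <-> gate a <> gate b).
Proof. intros [->|[E1 E2]]; simpl in *; [tauto | rewrite E1, E2; split; congruence]. Qed.

Lemma hyp_step_gate_neq e f : hyp_step adj e f ->
  gate (fst e) <> gate (snd e) -> gate (fst f) <> gate (snd f).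
Proof.
  intros [_ [_ [U | [[x [y [z [Axy [Ayz [Axz [He Hf]]]]]]]
                   | [a [b [c [e' [Sq [[H1 H2]|[H1 H2]]]]]]]]]]] P.
  - destruct U as [<-|[E1 E2]]; auto. rewrite <- E1, <- E2. congruence.
  - assert (Q : gate x <> gate y \/ gate y <> gate z \/ gate x <> gate z)
      by (destruct He as [He|[He|He]]; apply unord_eq_gate_neq in He; tauto).
    destruct (triangle_gate_change_all Axy Ayz Axz Q) as [Q1 [Q2 Q3]].
    destruct Hf as [Hf|[Hf|Hf]]; apply (unord_eq_gate_neq Hf); auto.
  - apply (unord_eq_gate_neq H2). apply (unord_eq_gate_neq H1) in P.
    apply (square_gate_change Sq); auto.
  - apply (unord_eq_gate_neq H2). apply (unord_eq_gate_neq H1) in P.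
    destruct Sq as [A1 [A2 [A3 [A4 [N1 [N2 [N3 N4]]]]]]].
    apply (square_gate_change (a := b) (b := c) (c := e') (e := a)); auto.
    repeat split; auto. intros X; apply N3, adj_sym; auto.
Qed.

Lemma edge_hyp_gate_neq e : edge_hyp e -> is_edge adj e /\ gate (fst e) <> gate (snd e).
Proof.
  intros H. apply clos_rt_rt1n in H.
  assert (Base : is_edge adj (x0, y0) /\ gate (fst (x0, y0)) <> gate (snd (x0, y0))).
  { simpl. rewrite !gate_id by auto using edge_clique_x0, edge_clique_y0.
    split; [exact Hxy | exact (adj_neq Hxy)]. }
  revert Base. induction H as [|e f g Hs _ IH]; auto.
  intros [_ P]. apply IH. split; [apply Hs | apply (hyp_step_gate_neq Hs P)].
Qed.

Lemma unord_eq_is_edge e a b : unord_eq e (a, b) -> adj a b -> is_edge adj e.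
Proof.
  intros [->|[E1 E2]] A; unfold is_edge; simpl in *; auto. rewrite E1, E2; apply adj_sym; auto.
Qed.

Lemma edge_hyp_step e f : edge_hyp e -> hyp_step adj e f -> edge_hyp f.
Proof. intros H S. eapply rt_trans; eauto. apply rt_step; auto. Qed.

Lemma triangle_hyp_step x y z e f : adj x y -> adj y z -> adj x z ->
  (unord_eq e (x, y) \/ unord_eq e (y, z) \/ unord_eq e (x, z)) ->
  (unord_eq f (x, y) \/ unord_eq f (y, z) \/ unord_eq f (x, z)) -> hyp_step adj e f.
Proof.
  intros Axy Ayz Axz He Hf. split; [|split].
  - destruct He as [H|[H|H]]; eapply unord_eq_is_edge; eauto.
  - destruct Hf as [H|[H|H]]; eapply unord_eq_is_edge; eauto.
  - right; left. exists x, y, z. repeat split; auto.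
Qed.

Lemma edge_hyp_sym x y : edge_hyp (x, y) -> edge_hyp (y, x).
Proof.
  intros H. apply (edge_hyp_step H). destruct (edge_hyp_gate_neq H) as [E _].
  repeat split; auto. unfold is_edge in *; simpl in *; apply adj_sym; auto.
  left; right; simpl; auto.
Qed.

Lemma edge_hyp_of_x0 v : edge_clique v -> v <> x0 -> edge_hyp (x0, v).
Proof.
  intros Cv Nx. destruct (classic (v = y0)) as [->|Ny]; [apply rt_refl|].
  apply (edge_hyp_step (rt_refl _ _ (x0, y0))).
  apply (triangle_hyp_step (x := x0) (y := y0) (z := v));
    auto using edge_clique_adj, edge_clique_x0, edge_clique_y0.
  - left; left; auto.
  - right; right; left; auto.
Qed.

Lemma edge_clique_edge_hyp v w : edge_clique v -> edge_clique w -> adj v w -> edge_hyp (v, w).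
Proof.
  intros Cv Cw A.
  destruct (classic (v = x0)) as [->|Nv]; [apply edge_hyp_of_x0; auto; exact (not_eq_sym (adj_neq A))|].
  destruct (classic (w = x0)) as [->|Nw]; [apply edge_hyp_sym, edge_hyp_of_x0; auto|].
  apply (edge_hyp_step (edge_hyp_of_x0 Cv Nv)).
  apply (triangle_hyp_step (x := x0) (y := v) (z := w)); auto using edge_clique_adj, edge_clique_x0.
  - left; left; auto.
  - right; left; left; auto.
Qed.

Lemma edge_clique_in_carrier v : edge_clique v -> in_carrier edge_hyp v.
Proof.
  intros Cv. destruct (classic (v = x0)) as [->|N].
  - exists y0. apply rt_refl.
  - exists x0. apply edge_hyp_sym, edge_hyp_of_x0; auto.
Qed.

(* Induction on the distance to the clique: the edge [v w] is the image, across a square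
   found by the quadrangle condition, of an edge one step closer to the clique. *)
Lemma edge_hyp_of_gate_neq_dist n v w :
  gate_dist v = n -> adj v w -> gate v <> gate w -> edge_hyp (v, w).
Proof.
  revert v w; induction n; intros v w Fv A N.
  - apply edge_clique_edge_hyp; auto; apply edge_clique_of_gate_dist0; auto.
    rewrite <- (gate_dist_eq_of_gate_neq A N); auto.
  - assert (Fw : gate_dist w = S n) by (rewrite <- (gate_dist_eq_of_gate_neq A N); auto).
    destruct (walk_split_last (n := n) (x := gate v) (z := v)) as [v' [W A']].
    { rewrite <- Fv, <- gdist_gate; apply gdist_walk. }
    pose proof (gdist_le_walk W). pose proof (gdist_adj_le (gate v) A').
    pose proof (gate_dist_le v' (gate_in v)). pose proof (gate_dist_adj (adj_sym A')).
    rewrite gdist_gate in *.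
    assert (Gv' : gate v = gate v') by (apply gate_unique; auto using gate_in; lia).
    assert (Qw : gdist (gate w) w = S n) by (rewrite gdist_gate; auto).
    assert (Qv : gdist (gate w) v = S (S n))
      by (rewrite gdist_off_gate; auto using gate_in; congruence).
    assert (Qv' : gdist (gate w) v' = S n)
      by (rewrite gdist_off_gate; auto using gate_in; [lia | congruence]).
    assert (Pw : gdist (gate v) w = S (S n)) by (rewrite gdist_off_gate; auto using gate_in).
    assert (Nv'w : v' <> w) by (intros ->; lia).
    destruct (quadrangle_gdist (gate w) (x := v') (y := w) (z := v)) as [u [Uv' [Uw Du]]];
      auto using adj_sym; try lia.
    pose proof (gdist_adj_le (gate v) Uw). pose proof (gate_dist_le u (gate_in w)).
    assert (Gu : gate v' <> gate u).
    { intros E. assert (X : gdist (gate v') u = gate_dist u) by (apply gdist_gate_of_eq; auto).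
      rewrite <- Gv' in X. lia. }
    assert (Hv'u : edge_hyp (v', u)) by (apply IHn; auto using adj_sym; lia).
    assert (Hwv : edge_hyp (w, v)).
    { apply (edge_hyp_step Hv'u). split; [|split]; [apply adj_sym; auto ..|].
      right; right. exists v, v', u, w. split.
      - repeat split; auto using adj_sym.
        + intros ->. lia.
        + intros X. pose proof (gdist_adj_le (gate w) (adj_sym X)). lia.
        + intros X. pose proof (gdist_adj_le (gate v) X). lia.
      - right; split; left; auto. }
    apply edge_hyp_sym; auto.
Qed.

Lemma edge_hyp_iff_gate_neq v w : adj v w -> (edge_hyp (v, w) <-> gate v <> gate w).
Proof.
  intros A; split.
  - intros H; apply (edge_hyp_gate_neq H).
  - apply (edge_hyp_of_gate_neq_dist eq_refl A).
Qed.

Lemma edge_clique_of_edge_hyp c x : edge_clique c -> adj c x -> edge_hyp (c, x) -> edge_clique x.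
Proof.
  intros Cc A H. apply edge_hyp_iff_gate_neq in H; auto. rewrite gate_id in H by auto.
  pose proof (gate_dist_le x Cc) as L. rewrite gdist_adj in L by auto.
  destruct (gate_dist x) as [|[|k]] eqn:F; try lia.
  - apply edge_clique_of_gate_dist0; auto.
  - exfalso. apply H, gate_unique; auto. rewrite gdist_adj, F; auto.
Qed.

Lemma same_sector_gate x y : same_sector adj edge_hyp x y -> gate x = gate y.
Proof.
  induction 1 as [x y [A N]| |]; try congruence.
  destruct (classic (gate x = gate y)); auto. exfalso. apply N, edge_hyp_iff_gate_neq; auto.
Qed.

Lemma same_sector_sym x y : same_sector adj edge_hyp x y -> same_sector adj edge_hyp y x.
Proof.
  induction 1 as [x y [A N]| |].
  - apply rt_step. split; [apply adj_sym; auto | intros X; apply N, edge_hyp_sym; auto].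
  - apply rt_refl.
  - eapply rt_trans; eauto.
Qed.

(* A geodesic from [v] to its gate keeps the same gate, so it crosses no edge of the hyperplane. *)
Lemma same_sector_to_gate_dist n v : gate_dist v = n -> same_sector adj edge_hyp v (gate v).
Proof.
  revert v; induction n; intros v Fv.
  - rewrite gate_id; [apply rt_refl | apply edge_clique_of_gate_dist0; auto].
  - destruct (walk_split_last (n := n) (x := gate v) (z := v)) as [u [W A]].
    { rewrite <- Fv, <- gdist_gate; apply gdist_walk. }
    pose proof (gdist_le_walk W). pose proof (gdist_adj_le (gate v) A).
    pose proof (gate_dist_le u (gate_in v)). pose proof (gate_dist_adj (adj_sym A)).
    rewrite gdist_gate in *.
    assert (Gu : gate v = gate u) by (apply gate_unique; auto using gate_in; lia).
    eapply rt_trans.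
    + apply rt_step. split; [apply adj_sym, A|].
      intros Hyp. apply (edge_hyp_gate_neq Hyp). auto.
    + rewrite Gu. apply IHn. lia.
Qed.

Lemma same_sector_iff_gate x y : same_sector adj edge_hyp x y <-> gate x = gate y.
Proof.
  split; [apply same_sector_gate|]. intros E.
  eapply rt_trans; [apply (same_sector_to_gate_dist x eq_refl)|].
  rewrite E. apply same_sector_sym, (same_sector_to_gate_dist y eq_refl).
Qed.

End EdgeClique.
End QuasiMedian.

Lemma edge_hyp_is_hyperplane {V : Type} {adj : V -> V -> Prop} {x0 y0 : V} :
  adj x0 y0 -> is_hyperplane adj (edge_hyp adj x0 y0).
Proof. intros A. exists (x0, y0). split; [exact A | tauto]. Qed.

Section Action.
Variables (G : Type) (mul : G -> G -> G) (inv : G -> G) (one : G).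
Variables (V : Type) (adj : V -> V -> Prop) (act : G -> V -> V).
Hypothesis HG : is_group mul inv one.
Hypothesis Hact : is_graph_action mul one adj act.

Lemma act_one x : act one x = x. Proof. apply Hact. Qed.
Lemma act_mul g h x : act (mul g h) x = act g (act h x). Proof. apply Hact. Qed.
Lemma act_adj g x y : adj x y -> adj (act g x) (act g y). Proof. apply Hact. Qed.

Lemma act_inv_l g x : act (inv g) (act g x) = x.
Proof. rewrite <- act_mul, (mul_inv_l HG), act_one; auto. Qed.

Lemma act_inv_r g x : act g (act (inv g) x) = x.
Proof. rewrite <- act_mul, (mul_inv_r HG), act_one; auto. Qed.

Lemma stab_hyp_iff J g :
  stab_hyp inv act J g <-> forall x y, J (x, y) <-> J (act g x, act g y).
Proof.
  split.
  - intros H x y. specialize (H (act g x, act g y)).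
    unfold translate_hyp in H; simpl in H. rewrite !act_inv_l in H. tauto.
  - intros H [a b]. unfold translate_hyp; simpl. rewrite (H (act (inv g) a)), !act_inv_r. tauto.
Qed.

Lemma stab_hyp_mul J g h :
  stab_hyp inv act J g -> stab_hyp inv act J h -> stab_hyp inv act J (mul g h).
Proof. rewrite !stab_hyp_iff. intros Hg Hh x y. rewrite !act_mul, Hh, Hg. tauto. Qed.

Lemma stab_hyp_inv J g : stab_hyp inv act J g -> stab_hyp inv act J (inv g).
Proof. rewrite !stab_hyp_iff. intros Hg x y. rewrite (Hg (act (inv g) x)), !act_inv_r. tauto. Qed.

Lemma stab_hyp_same_sector J g x y : stab_hyp inv act J g ->
  same_sector adj J x y -> same_sector adj J (act g x) (act g y).
Proof.
  intros S. rewrite stab_hyp_iff in S. induction 1 as [x y [A N]| |].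
  - apply rt_step. split; [apply act_adj; auto | rewrite <- S; auto].
  - apply rt_refl.
  - eapply rt_trans; eauto.
Qed.

Lemma sector_orbit_rel_trans J x y z : sector_orbit_rel inv adj act J x y ->
  sector_orbit_rel inv adj act J y z -> sector_orbit_rel inv adj act J x z.
Proof.
  intros [g [Sg Hg]] [h [Sh Hh]]. exists (mul h g). split.
  - apply stab_hyp_mul; auto.
  - rewrite act_mul. eapply rt_trans; [apply stab_hyp_same_sector|]; eauto.
Qed.

Lemma in_carrier_translate J g v :
  in_carrier J v -> in_carrier (translate_hyp inv act g J) (act g v).
Proof. intros [w H]. exists (act g w). unfold translate_hyp; simpl. rewrite !act_inv_l; auto. Qed.

Hypothesis HX : quasi_median adj.
Hypothesis Hspecial : special_action inv one adj act.

(* Condition (1) of hyperplane-specialness: distinct translates of a hyperplane are not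
   tangent, so they cannot share a vertex of their carriers. *)
Lemma stab_hyp_of_common_carrier J g v : is_hyperplane adj J -> in_carrier J v ->
  in_carrier (translate_hyp inv act g J) v -> stab_hyp inv act J g.
Proof.
  intros HJ C1 C2. destruct (classic (stab_hyp inv act J g)) as [|N]; auto. exfalso.
  destruct (proj1 (proj2 (proj1 Hspecial)) J g HJ N) as [NT NTg]. apply NTg.
  split; [|split]; [intros X; apply N; intros e; specialize (X e); tauto | auto | eauto].
Qed.

Section EdgeHyperplane.
Variables x0 y0 : V.
Hypothesis Hxy : adj x0 y0.
Notation J := (edge_hyp adj x0 y0).
Notation gate := (gate HX x0 y0).
Notation C := (edge_clique adj x0 y0).
Notation stab := (stab_hyp inv act J).

Lemma stab_gate_free g x : stab g -> gate (act g x) = gate x -> forall y, gate (act g y) = gate y.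
Proof.
  intros S E y. apply (same_sector_iff_gate HX x0 y0 Hxy).
  apply (proj2 Hspecial J (edge_hyp_is_hyperplane Hxy) g S).
  exists x. apply (same_sector_iff_gate HX x0 y0 Hxy); auto.
Qed.

Lemma stab_gate_congr g x y : stab g -> gate x = gate y -> gate (act g x) = gate (act g y).
Proof.
  intros S E. apply (same_sector_iff_gate HX x0 y0 Hxy), stab_hyp_same_sector; auto.
  apply (same_sector_iff_gate HX x0 y0 Hxy); auto.
Qed.

Lemma stab_maps_edge_clique k z : stab k -> C z -> C (act k z) -> forall v, C v -> C (act k v).
Proof.
  intros S Cz Ckz v Cv. destruct (classic (v = z)) as [->|N]; auto.
  assert (A : adj z v) by (apply (edge_clique_adj HX Hxy); auto).
  assert (Jz : J (z, v)) by (apply (edge_clique_edge_hyp HX Hxy); auto).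
  rewrite stab_hyp_iff in S. apply S in Jz.
  apply (edge_clique_of_edge_hyp HX Hxy (c := act k z)); auto. apply act_adj; auto.
Qed.

Lemma stab_set_act g v : stab_set inv act C g -> C v -> C (act g v).
Proof. intros S Cv. apply (S (act g v)). rewrite act_inv_l; auto. Qed.

Lemma stab_set_inv g : stab_set inv act C g -> stab_set inv act C (inv g).
Proof.
  intros S v. rewrite (inv_inv HG). split; intros H.
  - pose proof (proj2 (S (act g v)) H) as X. rewrite act_inv_l in X. exact X.
  - apply stab_set_act; auto.
Qed.

Lemma stab_set_stab_hyp g : stab_set inv act C g -> stab g.
Proof.
  intros S. apply (stab_hyp_of_common_carrier (v := act g x0)).
  - apply edge_hyp_is_hyperplane; auto.
  - apply (edge_clique_in_carrier HX Hxy), stab_set_act, (edge_clique_x0 adj x0 y0); auto.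
  - apply in_carrier_translate, (edge_clique_in_carrier HX Hxy), edge_clique_x0.
Qed.

Lemma stab_set_of_edge_clique_point k z : C z -> C (act k z) -> stab_set inv act C k.
Proof.
  intros Cz Ckz.
  assert (S : stab k).
  { apply (stab_hyp_of_common_carrier (v := act k z)).
    - apply edge_hyp_is_hyperplane; auto.
    - apply (edge_clique_in_carrier HX Hxy); auto.
    - apply in_carrier_translate, (edge_clique_in_carrier HX Hxy); auto. }
  intros v. split; intros H.
  - rewrite <- (act_inv_r k v). apply (stab_maps_edge_clique S Cz); auto.
  - apply (stab_maps_edge_clique (k := inv k) (z := act k z)); auto using stab_hyp_inv.
    rewrite act_inv_l; auto.
Qed.

End EdgeHyperplane.

(* Freeness on sectors forces an element fixing [v] to fix every sector of the hyperplane
   of [v y]; as [y] is the only vertex of its sector in the clique of [v y], [g] fixes [y]. *)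
Lemma act_fixes_nbr g v y : act g v = v -> adj v y -> act g y = y.
Proof.
  intros E A.
  assert (S : stab_hyp inv act (edge_hyp adj v y) g).
  { apply (stab_hyp_of_common_carrier (v := v)); [apply edge_hyp_is_hyperplane; auto | |].
    - exists y. apply rt_refl.
    - exists (act g y). unfold translate_hyp; simpl.
      assert (Ei : act (inv g) v = v) by (rewrite <- (act_inv_l g v) at 2; rewrite E; auto).
      rewrite act_inv_l, Ei. apply rt_refl. }
  pose proof (stab_gate_free A v S) as F. rewrite E in F. specialize (F eq_refl y).
  rewrite (gate_id HX A (edge_clique_y0 adj v y)) in F.
  assert (Hgy : edge_hyp adj v y (v, act g y)).
  { rewrite stab_hyp_iff in S. pose proof (proj1 (S v y) (rt_refl _ _ _)) as X.
    rewrite E in X. exact X. }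
  assert (Cgy : edge_clique adj v y (act g y)).
  { apply (edge_clique_of_edge_hyp HX A (c := v)); auto using edge_clique_x0.
    rewrite <- E at 1. apply act_adj; auto. }
  rewrite (gate_id HX A Cgy) in F. exact F.
Qed.

Lemma eq_one_of_fixed_point g v : act g v = v -> g = one.
Proof.
  intros E. apply (proj1 (proj1 Hspecial)). intros x.
  destruct (proj1 (proj2 HX) v x) as [n W]. induction W; auto.
  apply IHW, (act_fixes_nbr E); auto.
Qed.

Hypothesis Horb : finitely_many_vertex_orbits act.

Section EdgeHyperplaneOrbits.
Variables x0 y0 : V.
Hypothesis Hxy : adj x0 y0.
Notation J := (edge_hyp adj x0 y0).
Notation gate := (gate HX x0 y0).
Notation C := (edge_clique adj x0 y0).
Notation stab := (stab_hyp inv act J).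

(* Every sector contains a vertex of the clique (its gate), so the finitely many vertex
   orbits meeting the clique give representatives of all sector orbits. *)
Lemma sector_orbits_finite :
  exists l : list V, forall x, exists u, In u l /\ sector_orbit_rel inv adj act J u x.
Proof.
  destruct Horb as [l Hl].
  destruct (list_choice (fun u w => (exists h, act h u = w) /\ C w) l) as [lw [Hlw Hcover]].
  exists lw. intros x.
  destruct (Hl (gate x)) as [u [g [Iu Eg]]].
  destruct (Hcover u Iu) as [w [Iw [[h Eh] Cw]]]; [exists (gate x); split; eauto using gate_in|].
  assert (Ek : act (mul g (inv h)) w = gate x) by (rewrite act_mul, <- Eh, act_inv_l; auto).
  exists w. split; auto. exists (mul g (inv h)). split.
  - apply stab_set_stab_hyp; auto. apply (stab_set_of_edge_clique_point Hxy (z := w)); auto.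
    rewrite Ek. apply gate_in.
  - rewrite Ek. apply (same_sector_iff_gate HX x0 y0 Hxy), gate_id, gate_in; auto.
Qed.

Lemma stab_set_sect_eq_inj b1 b2 : stab_set inv act C b1 -> stab_set inv act C b2 ->
  sect_eq adj act J b1 b2 -> b1 = b2.
Proof.
  intros S1 S2 H. specialize (H x0). apply (same_sector_iff_gate HX x0 y0 Hxy) in H.
  pose proof (stab_set_act S1 (edge_clique_x0 adj x0 y0)) as C1.
  pose proof (stab_set_act S2 (edge_clique_x0 adj x0 y0)) as C2.
  rewrite (gate_id HX Hxy C1), (gate_id HX Hxy C2) in H.
  apply (eq_of_inv_mul_eq_one HG), (eq_one_of_fixed_point (v := x0)).
  rewrite act_mul, H, act_inv_l; auto.
Qed.

(* For each vertex orbit meeting the clique in a vertex [w], fix one [c] in the hyperplane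
   stabiliser sending the sector of [x0] to that of [w]; the inverses of these finitely many
   [c] are coset representatives, by freeness of the action on sectors. *)
Lemma stab_hyp_cover : exists lc : list G, (forall c, In c lc -> stab c) /\
  forall a, stab a -> exists c b, In c lc /\ stab_set inv act C b /\
    sect_eq adj act J a (mul c b).
Proof.
  destruct Horb as [l Hl].
  destruct (list_choice (fun u (p : G * V) => stab (fst p) /\ C (snd p) /\
      (exists h, act h u = snd p) /\ gate (act (fst p) x0) = snd p) l) as [lp [Hlp Hcover]].
  exists (map (fun p => inv (fst p)) lp). split.
  - intros c Ic. apply in_map_iff in Ic. destruct Ic as [p [<- Ip]].
    destruct (Hlp p Ip) as [u [Sp _]]. apply stab_hyp_inv; auto.
  - intros a Sa.
    set (w' := gate (act (inv a) x0)).
    destruct (Hl w') as [u [g [Iu Eg]]].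
    destruct (Hcover u Iu) as [[c w] [Ip [Sc [Cw [[h Eh] Ec]]]]]; simpl in *.
    { exists (inv a, w'); simpl.
      split; [apply stab_hyp_inv; auto | split; [apply gate_in | split; eauto]]. }
    set (k := mul g (inv h)).
    assert (Ek : act k w = w') by (unfold k; rewrite act_mul, <- Eh, act_inv_l; auto).
    assert (SCk : stab_set inv act C k)
      by (apply (stab_set_of_edge_clique_point Hxy (z := w)); auto; rewrite Ek; apply gate_in).
    assert (Sk : stab k) by (apply stab_set_stab_hyp; auto).
    exists (inv c), (inv k). split; [|split].
    + apply in_map_iff. exists (c, w); auto.
    + apply stab_set_inv; auto.
    + set (m := mul a (mul k c)).
      assert (Sm : stab m) by (apply stab_hyp_mul, stab_hyp_mul; auto).
      assert (Gm : gate (act m x0) = gate x0).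
      { assert (Gw' : gate w' = gate (act (inv a) x0)) by (apply gate_id, gate_in; auto).
        assert (Gcx0 : gate (act c x0) = gate w) by (rewrite Ec; symmetry; apply gate_id; auto).
        pose proof (stab_gate_congr Hxy _ _ Sk Gcx0) as Gk. rewrite Ek, Gw' in Gk.
        pose proof (stab_gate_congr Hxy _ _ Sa Gk) as Ga. rewrite act_inv_r in Ga.
        unfold m. rewrite !act_mul. exact Ga. }
      intros x. apply (same_sector_iff_gate HX x0 y0 Hxy).
      pose proof (stab_gate_free Hxy x0 Sm Gm (act (mul (inv c) (inv k)) x)) as F.
      unfold m in F. rewrite !act_mul, !act_inv_r in F. rewrite act_mul. exact F.
Qed.

Lemma stab_hyp_fi_sub_iso_stab_set :
  fi_sub_iso (stab_hyp inv act J) (sect_eq adj act J) mul (stab_set inv act C) mul.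
Proof.
  destruct stab_hyp_cover as [lc [Hlc Hcover]].
  exists (fun b => b). split; [|split; [|split]].
  - intros b Hb. apply stab_set_stab_hyp; auto.
  - intros b1 b2 _ _ x. apply rt_refl.
  - intros b1 b2 H1 H2. apply stab_set_sect_eq_inj; auto.
  - exists lc; auto.
Qed.

End EdgeHyperplaneOrbits.
End Action.

Unset Implicit Arguments.

Theorem corollary3p5
  (G : Type) (mul : G -> G -> G) (inv : G -> G) (one : G)
  (V : Type) (adj : V -> V -> Prop) (act : G -> V -> V)
  (HG : is_group mul inv one)
  (HX : quasi_median adj)
  (Hact : is_graph_action mul one adj act)
  (Hspecial : special_action inv one adj act)
  (Horb : finitely_many_vertex_orbits act) :
  forall J : V * V -> Prop, is_hyperplane adj J ->
    (exists l : list V, forall x, exists u, In u l /\ sector_orbit_rel inv adj act J u x) /\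
    (exists C : V -> Prop, is_clique adj C /\
       (forall x y, C x -> C y -> adj x y -> J (x, y)) /\
       fi_sub_iso (stab_hyp inv act J) (sect_eq adj act J) mul
                  (stab_set inv act C) mul) /\
    (forall (K : Type) (mulK : K -> K -> K) (invK : K -> K) (oneK : K)
            (f : K -> V),
       is_group mulK invK oneK ->
       (forall x, exists k, sector_orbit_rel inv adj act J (f k) x) ->
       (forall k1 k2, sector_orbit_rel inv adj act J (f k1) (f k2) -> k1 = k2) ->
       (exists lK : list K, forall k, In k lK) /\
       exists C : V -> Prop, is_clique adj C /\
         fi_sub_iso (fun p : G * K => stab_hyp inv act J (fst p))
           (fun p q : G * K => sect_eq adj act J (fst p) (fst q) /\ snd p = snd q)
           (fun p q : G * K => (mul (fst p) (fst q), mulK (snd p) (snd q)))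
           (stab_set inv act C) mul).
Proof.
  intros J [[x0 y0] [Hxy HJ]]. change (adj x0 y0) in Hxy.
  assert (EJ : J = edge_hyp adj x0 y0).
  { apply functional_extensionality; intros e; apply propositional_extensionality, HJ. }
  subst J.
  destruct (sector_orbits_finite HG Hact HX Hspecial Horb x0 y0 Hxy) as [l Hl].
  pose proof (stab_hyp_fi_sub_iso_stab_set HG Hact HX Hspecial Horb x0 y0 Hxy) as Hfi.
  pose proof (edge_clique_is_clique HX x0 y0 Hxy) as Hclique.
  split; [|split].
  - exists l; auto.
  - exists (edge_clique adj x0 y0). split; [|split]; auto.
    intros x y Cx Cy A. apply (edge_clique_edge_hyp HX Hxy); auto.
  - intros K mulK invK oneK f HK Hsurj Hinj.
    assert (Hfin : exists lK : list K, forall k, In k lK).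
    { apply (finite_of_orbit_labelling (sector_orbit_rel inv adj act (edge_hyp adj x0 y0)) f l);
        auto.
      intros x y z. apply (sector_orbit_rel_trans HG Hact). }
    split; auto. exists (edge_clique adj x0 y0). split; auto.
    apply (fi_sub_iso_prod_finite HK); auto.
Qed.
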